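(* Let $q$ be a prime power and $L\in\mathbb{F}_q[x]$ a $q$-polynomial such that $L(x)/x$ is irreducible over $\mathbb{F}_q$. Then $L$ is not a $q^s$-polynomial for any integer $s>1$.
   Context: A $q$-polynomial is $\sum_{i=0}^n a_ix^{q^i}$; it is a $q^s$-polynomial if it has the form $\sum_{i=0}^m b_ix^{q^{is}}$, i.e. only exponents $q^j$ with $s\mid j$ occur. *)

From HB Require Import structures.
From mathcomp Require Import all_boot all_order all_algebra all_field.
Set Implicit Arguments. Unset Strict Implicit. Unset Printing Implicit Defensive.
Import GRing.Theory.
Local Open Scope ring_scope.

Definition is_qpoly (F : nzRingType) (q : nat) (L : {poly F}) : Prop :=
  forall j : nat, L`_j != 0 -> exists i : nat, j = (q ^ i)%N.

Definition is_qspoly (F : nzRingType) (q s : nat) (L : {poly F}) : Prop :=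
  forall j : nat, L`_j != 0 -> exists i : nat, j = (q ^ (i * s))%N.

From HB Require Import structures.
From mathcomp Require Import all_boot all_order all_algebra all_field.
From mathcomp Require Import zify.
Set Implicit Arguments. Unset Strict Implicit. Unset Printing Implicit Defensive.
Import GRing.Theory.
Local Open Scope ring_scope.

(* Let f = L/x have degree n, let alpha be the class of x in the field
   E = F_q[x]/(f) and let sigma be the F_q-linear map x |-> x^(q^s) of E.  If L
   is a q^s-polynomial of degree q^(ms), then L(alpha) = 0 puts sigma^m alpha
   in the F_q-span W of alpha, ..., sigma^(m-1) alpha, so W is sigma-stable and
   contains the whole sigma-orbit of alpha.  An identity alpha^(q^d) = alpha
   with d > 0 fixes all of E and so forces n <= d; since
   (q^m - 1) s < q^(ms) - 1 = n, the first q^m orbit elements are distinct,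
   and they are nonzero, whence q^m + 1 <= |W| <= q^m. *)

Lemma pred_mul_ltn_pred_exp (Q s : nat) :
  (1 < Q)%N -> (1 < s)%N -> (Q.-1 * s < (Q ^ s).-1)%N.
Proof.
move=> Q_gt1; elim: s => [|s IHs] // s_gt0; rewrite expnS.
have Qs_ge1 : (1 <= Q ^ s)%N by rewrite expn_gt0; lia.
case: (ltngtP 1 s) => [/IHs|//|<-]; nia.
Qed.

Lemma card_le_of_expr_id (R : finIdomainType) (N : nat) :
  (1 < N)%N -> (forall x : R, x ^+ N = x) -> (#|R| <= N)%N.
Proof.
move=> N_gt1 idN; pose P : {poly R} := 'X^N - 'X.
have size_P : size P = N.+1.
  by rewrite size_polyDl ?size_polyXn ?size_polyN ?size_polyX.
have P_neq0 : P != 0 by rewrite -size_poly_eq0 size_P.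
have roots_P : all (root P) (enum R).
  by apply/allP => x _; rewrite /root !hornerE idN subrr.
by have := max_poly_roots P_neq0 roots_P (enum_uniq _); rewrite size_P cardE.
Qed.

Lemma qpoly_divXK (K : fieldType) q (L : {poly K}) :
  (0 < q)%N -> is_qpoly q L -> L %/ 'X * 'X = L.
Proof.
move=> q_gt0 L_q; rewrite divpK // -['X]subr0 -polyC0 dvdp_XsubCl.
rewrite /root horner_coef0; apply: contraTT q_gt0 => /L_q[i /esym/eqP].
by rewrite expn_eq0 => /andP[/eqP->].
Qed.

Lemma qspoly_expand (R : nzRingType) q s m (L : {poly R}) :
  (1 < q)%N -> (0 < s)%N -> is_qspoly q s L ->
  (size L <= (q ^ (m * s)).+1)%N ->
  L = \sum_(j < m.+1) L`_(q ^ (j * s)) *: 'X^(q ^ (j * s)).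
Proof.
move=> q_gt1 s_gt0 L_qs size_L; apply/polyP => i; rewrite coef_sum.
under eq_bigr do rewrite coefZ coefXn.
have [Li0|/[dup] Li_neq0 /L_qs[j Di]] := eqVneq L`_i 0.
  by rewrite Li0 big1 // => j _; case: eqP => [<-|_]; rewrite ?mulr0 ?mulr1.
have lt_jm : (j < m.+1)%N.
  have lt_i_size : (i < size L)%N.
    by apply: contraNT Li_neq0; rewrite -leqNgt => ?; rewrite nth_default.
  have := leq_trans lt_i_size size_L.
  by rewrite ltnS Di leq_exp2l // leq_pmul2r.
rewrite (bigD1 (Ordinal lt_jm)) //= -Di eqxx mulr1 big1 ?addr0 // => k neq_kj.
rewrite Di eqn_exp2l // eqn_pmul2r //.
case: eqP => [Djk|]; last by rewrite mulr0.
by rewrite -val_eqE /= -Djk eqxx in neq_kj.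
Qed.

Lemma monic_irreducible_scale (K : fieldType) (p : {poly K}) :
  irreducible_poly p -> monic_irreducible_poly ((lead_coef p)^-1 *: p).
Proof.
move=> p_irr; have lp_neq0 : (lead_coef p)^-1 != 0.
  by rewrite invr_eq0 lead_coef_eq0 irredp_neq0.
split; last by rewrite monicE lead_coefZ mulVf // -invr_eq0.
split=> [|d size_d]; first by rewrite size_scale //; case: p_irr.
rewrite dvdpZr // => /(p_irr.2 _ size_d) eqp_dp.
by rewrite (eqp_trans eqp_dp) // eqp_sym eqp_scale.
Qed.

Section QFrobenius.
Variables (F : finFieldType) (E : fieldExtType F).
Local Notation q := #|F|.

Definition qFrob (k : nat) (x : E) : E := x ^+ (q ^ k)%N.

Lemma expf_card_exp (c : F) k : c ^+ (q ^ k)%N = c.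
Proof.
by elim: k => [|k IHk]; rewrite ?expr1 // expnSr exprM IHk expf_card.
Qed.

Lemma pchar_nat_card_exp k : [pchar E].-nat (q ^ k)%N.
Proof.
have [p p_prime pcharFp] := finPcharP F.
rewrite (card_pprimeChar pcharFp) -expnM pnatX /=.
have pcharEp : p \in [pchar E] by rewrite (pchar_lalg E).
by rewrite (eq_pnat _ (pcharf_eq pcharEp)) pnat_id.
Qed.

Fact qFrob_is_nmod_morphism k : nmod_morphism (qFrob k).
Proof.
split=> [|x y]; rewrite /qFrob ?expr0n ?exprDn_pchar ?pchar_nat_card_exp //.
by rewrite expn_eq0 gtn_eqF // ltnW // finNzRing_gt1.
Qed.

Fact qFrob_is_monoid_morphism k : monoid_morphism (qFrob k).
Proof. by split=> [|x y]; rewrite /qFrob ?expr1n ?exprMn. Qed.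

Fact qFrob_is_scalable k : scalable (qFrob k).
Proof. by move=> c x; rewrite /qFrob exprZn expf_card_exp. Qed.

HB.instance Definition _ k := GRing.isNmodMorphism.Build E E (qFrob k)
  (qFrob_is_nmod_morphism k).
HB.instance Definition _ k := GRing.isMonoidMorphism.Build E E (qFrob k)
  (qFrob_is_monoid_morphism k).
HB.instance Definition _ k := GRing.isScalable.Build F E E *:%R (qFrob k)
  (qFrob_is_scalable k).

Lemma qFrob_inj k : injective (qFrob k).
Proof. exact: fmorph_inj. Qed.

Lemma qFrobD i j x : qFrob i (qFrob j x) = qFrob (i + j) x.
Proof. by rewrite /qFrob -exprM -expnD addnC. Qed.

Lemma qFrob_span k (X : seq E) (U : {vspace E}) :
  {subset map (qFrob k) X <= U} -> {in <<X>>%VS, forall v, qFrob k v \in U}.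
Proof.
move=> /span_subvP XU v Xv; apply: subvP XU _ _.
have := memv_img (linfun (qFrob k)) Xv.
by rewrite limg_span lfunE (eq_map (lfunE (qFrob k))).
Qed.

Lemma qFrob_orbit_in_span (s m : nat) (alpha : E) (b : nat -> F) :
  let orbit j := qFrob (j * s) alpha in
  b m != 0 -> \sum_(j < m.+1) b j *: orbit j = 0 ->
  forall j, orbit j \in <<mkseq orbit m>>%VS.
Proof.
move=> orbit bm_neq0 rel; set W := <<_>>%VS.
have orbit_lt_m i : (i < m)%N -> orbit i \in W.
  by move=> lt_im; rewrite memv_span // map_f // mem_iota.
have orbit_m : orbit m \in W.
  move/eqP: rel; rewrite big_ord_recr /= addrC addr_eq0 => /eqP Dm.
  rewrite -(scalerK bm_neq0 (orbit m)) Dm rpredZ // rpredN rpred_sum // => i _.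
  by rewrite rpredZ // orbit_lt_m.
have orbitS i : qFrob s (orbit i) = orbit i.+1 by rewrite /orbit qFrobD mulSn.
have W_stable : {in W, forall v, qFrob s v \in W}.
  apply: qFrob_span => _ /mapP[_ /mapP[i + -> ->]]; rewrite mem_iota orbitS /=.
  by rewrite add0n leq_eqVlt => /predU1P[-> | /orbit_lt_m].
elim=> [|j IHj]; last by rewrite -orbitS W_stable.
by have [m0|/orbit_lt_m //] := posnP m; rewrite -m0.
Qed.
End QFrobenius.

Section IrreducibleQuotient.
Variables (F : finFieldType) (h : {poly F}) (hI : monic_irreducible_poly h).
Local Notation E := {poly %/ h with hI}.
Local Notation q := #|F|.
Let alpha : E := in_qpoly h 'X.

Lemma in_qpoly_dvdp p : h %| p -> in_qpoly h p = 0 :> E.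
Proof.
move=> dvd_hp; apply: val_inj; rewrite /= (mk_monicE hI).
by apply: Pdiv.Ring.rmodp_eq0; rewrite -dvdpE.
Qed.

Lemma qfpoly_expand (e : E) : e = \sum_(i < size e) e`_i *: alpha ^+ i.
Proof.
transitivity (in_qpoly h e : E).
  by apply: val_inj; rewrite [RHS]in_qpoly_small // size_mk_monic.
rewrite -[in LHS](coefK e) poly_def linear_sum /=.
by apply: eq_bigr => i _; rewrite in_qpolyZ rmorphXn.
Qed.

Lemma qFrob_fixed_all d : qFrob d alpha = alpha -> forall e : E, qFrob d e = e.
Proof.
move=> fix_alpha e; rewrite [in RHS](qfpoly_expand e) [in LHS](qfpoly_expand e).
rewrite rmorph_sum; apply: eq_bigr => i _ /=.
by rewrite linearZ rmorphXn /= fix_alpha.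
Qed.

Lemma size_le_of_qFrob_fixed d :
  (0 < d)%N -> qFrob d alpha = alpha -> ((size h).-1 <= d)%N.
Proof.
move=> d_gt0 /qFrob_fixed_all fix_all.
have q_gt1 : (1 < q)%N := finNzRing_gt1 F.
rewrite -(leq_exp2l _ _ q_gt1) -card_qfpoly; apply: card_le_of_expr_id fix_all.
by rewrite -(expn0 q) ltn_exp2l.
Qed.

Lemma qFrob_orbit_inj N s :
  (0 < s)%N -> (N.-1 * s < (size h).-1)%N ->
  injective (fun j : 'I_N => qFrob (j * s) alpha).
Proof.
move=> s_gt0 small_orbit i j /= eq_ij; apply/val_inj.
wlog lt_ij : i j eq_ij / (i < j)%N.
  move=> wlog_lt; case: (ltngtP i j) => [|/(wlog_lt j i (esym eq_ij))->|] //.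
  exact: wlog_lt.
have period_le : ((size h).-1 <= (j - i) * s)%N.
  apply: size_le_of_qFrob_fixed; first by rewrite muln_gt0 subn_gt0 lt_ij.
  apply: (@qFrob_inj _ _ (i * s)).
  by rewrite qFrobD -mulnDl subnKC ?(ltnW lt_ij).
have orbit_le : ((j - i) * s <= N.-1 * s)%N.
  by rewrite leq_mul2r; have := ltn_ord j; lia.
by have := leq_trans period_le orbit_le; rewrite leqNgt small_orbit.
Qed.

Lemma in_qpoly_qspoly s m (L : {poly F}) :
  (0 < s)%N -> is_qspoly q s L -> (size L <= (q ^ (m * s)).+1)%N ->
  in_qpoly h L = \sum_(j < m.+1) L`_(q ^ (j * s)) *: qFrob (j * s) alpha :> E.
Proof.
move=> s_gt0 L_qs size_L.
have q_gt1 : (1 < q)%N := finNzRing_gt1 F.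
rewrite [in LHS](qspoly_expand q_gt1 s_gt0 L_qs size_L) linear_sum /=.
by apply: eq_bigr => j _; rewrite in_qpolyZ rmorphXn.
Qed.

Lemma size_le_of_qFrob_relation m s (b : nat -> F) :
  (0 < s)%N -> (0 < m)%N -> b m != 0 ->
  \sum_(j < m.+1) b j *: qFrob (j * s) alpha = 0 ->
  ((size h).-1 <= (q ^ m).-1 * s)%N.
Proof.
move=> s_gt0 m_gt0 bm_neq0 rel; rewrite leqNgt; apply/negP => small_orbit.
have orbit_in_W := qFrob_orbit_in_span bm_neq0 rel.
set W := <<_>>%VS in orbit_in_W.
have q_gt1 : (1 < q)%N := finNzRing_gt1 F.
have qm_gt1 : (1 < q ^ m)%N by rewrite -(expn0 q) ltn_exp2l.
have alpha_neq0 : alpha != 0.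
  apply: contraTneq small_orbit => alpha0; rewrite -leqNgt.
  have fixed1 : qFrob 1 alpha = alpha by rewrite alpha0 rmorph0.
  apply: leq_trans (size_le_of_qFrob_fixed _ fixed1) _ => //.
  by rewrite muln_gt0 s_gt0 -ltnS prednK ?qm_gt1 // ltnW.
pose first_orbit := [set qFrob (val j * s) alpha | j : 'I_(q ^ m)].
have orbit_sub : 0 |: first_orbit \subset W.
  apply/subsetP => _ /setU1P[-> | /imsetP[j _ ->]]; first exact: mem0v.
  exact: orbit_in_W.
have := subset_leq_card orbit_sub.
rewrite cardsU1 card_imset ?card_ord; last exact: qFrob_orbit_inj small_orbit.
have -> : 0 \notin first_orbit.
  by apply/imsetP => -[j _ /esym/eqP]; rewrite fmorph_eq0 (negPf alpha_neq0).
rewrite card_vspace add1n ltn_exp2l // ltnNge.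
by rewrite (leq_trans (dim_span _)) // size_mkseq.
Qed.
End IrreducibleQuotient.

Theorem theorem7p7 (F : finFieldType) (q : nat) (hq : #|F| = q)
  (L : {poly F}) (hL : is_qpoly q L)
  (hirr : irreducible_poly (L %/ 'X)) :
  forall s : nat, (1 < s)%N -> ~ is_qspoly q s L.
Proof.
move=> s s_gt1 L_qs; subst q.
have q_gt1 : (1 < #|F|)%N := finNzRing_gt1 F.
have s_gt0 : (0 < s)%N := ltnW s_gt1.
set f := L %/ 'X in hirr.
have L_eq : L = f * 'X by rewrite (qpoly_divXK _ hL) // ltnW.
have f_neq0 : f != 0 := irredp_neq0 hirr.
have L_neq0 : L != 0 by rewrite L_eq mulf_neq0 ?polyX_eq0.
have [m size_L] : exists m, (size L).-1 = (#|F| ^ (m * s))%N.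
  by apply: L_qs; rewrite -lead_coefE lead_coef_eq0.
have size_f : size f = (#|F| ^ (m * s))%N by rewrite -size_L L_eq size_mulX.
have m_gt0 : (0 < m)%N.
  by case: hirr; rewrite size_f; case: m {size_L size_f} => //; rewrite mul0n.
have hI := monic_irreducible_scale hirr.
have := size_le_of_qFrob_relation (hI := hI)
  (b := fun j => L`_(#|F| ^ (j * s))) s_gt0 m_gt0.
rewrite -in_qpoly_qspoly //; last by rewrite -size_L leqSpred.
rewrite -size_L -lead_coefE lead_coef_eq0 L_neq0.
rewrite in_qpoly_dvdp; last first.
  by rewrite L_eq dvdp_mulr // dvdpZl // invr_eq0 lead_coef_eq0.
rewrite size_scale ?invr_eq0 ?lead_coef_eq0 // size_f expnM => /(_ isT erefl).
by rewrite leqNgt pred_mul_ltn_pred_exp // -(expn0 #|F|) ltn_exp2l.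
Qed.
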